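(* Let $(X,\|\cdot\|)$ be a Banach space and let $\{v_n\}_{n\in\mathbb{N}}\subset X$ be a sequence such that $\|v_{n+m}\|\le\|v_n+v_m\|$ for all $n,m\in\mathbb{N}$. Assume that either (i) there exists $i\in\mathbb{N}$ with $v_i=0$, or (ii) $v_n\neq0$ for all $n\in\mathbb{N}$ and the set $\left\{\frac{v_n}{\|v_n\|}\right\}_{n\in\mathbb{N}}$ is a uniformly convex subset of $X$. Then the limit $\lim_{n\to\infty}\frac{v_n}{n}$ exists in $X$.
   Context: $\mathbb{N}=\{1,2,3,\dots\}$. A subset $S$ of a normed space $X$ is called uniformly convex if for every $\varepsilon>0$ there exists $\delta\in(0,1)$ such that for all $u,v\in S$ with $\|u\|=\|v\|=1$ and $\|u-v\|\ge\varepsilon$ we have $\|u+v\|\le 2-\delta$. *)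

From HB Require Import structures.
From mathcomp Require Import all_boot all_order all_algebra.
From mathcomp Require Import all_classical all_reals all_analysis.
Set Implicit Arguments. Unset Strict Implicit. Unset Printing Implicit Defensive.
Import Order.TTheory GRing.Theory Num.Theory.
Import numFieldNormedType.Exports.
Local Open Scope classical_set_scope.
Local Open Scope ring_scope.

Definition uniformly_convex_set (R : realType) (X : normedModType R)
  (S : set X) : Prop :=
  forall eps : R, 0 < eps ->
    exists delta : R, 0 < delta /\ delta < 1 /\
      forall u v : X, S u -> S v -> `|u| = 1 -> `|v| = 1 ->
        eps <= `|u - v| -> `|u + v| <= 2 - delta.

From HB Require Import structures.
From mathcomp Require Import all_boot all_order all_algebra.
From mathcomp Require Import all_classical all_reals all_analysis.
From mathcomp Require Import lra.
Set Implicit Arguments. Unset Strict Implicit. Unset Printing Implicit Defensive.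
Import Order.TTheory GRing.Theory Num.Theory.
Import numFieldNormedType.Exports.
Local Open Scope classical_set_scope.
Local Open Scope ring_scope.

(* By Fekete's lemma, |v n| / n tends to L = inf_n |v n| / n.  If L = 0 we are
   done, and v i = 0 forces L = 0.  Otherwise write v n / n as
   (|v n| / n) * u n with u n = v n / |v n|; it suffices that u is Cauchy.
   If u n and u n' stay 2 eps apart for large n, n', every later u m is eps
   away from one of them, say u k, and uniform convexity then makes
   |v (m + k)| - L (m + k) smaller than |v m| - L m by a fixed amount.
   Iterating drives this nonnegative excess below zero. *)

Definition ratio_inf (R : realType) (a : nat -> R) : R :=
  inf [set a n / n%:R | n in [set n : nat | (0 < n)%N]].

Section Fekete.
Variables (R : realType) (a : nat -> R).
Hypothesis a_ge0 : forall n, 0 <= a n.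
Hypothesis a_subadd :
  forall n m, (0 < n)%N -> (0 < m)%N -> a (n + m)%N <= a n + a m.

Let ratios := [set a n / n%:R | n in [set n : nat | (0 < n)%N]].

Let ratios_has_inf : has_inf ratios.
Proof.
split; first by exists (a 1%N / 1%:R), 1%N.
by exists 0 => _ [n _ <-]; rewrite divr_ge0.
Qed.

Lemma ratio_inf_ge0 : 0 <= ratio_inf a.
Proof.
apply: lb_le_inf; first by case: ratios_has_inf.
by move=> _ [n _ <-]; rewrite divr_ge0.
Qed.

Lemma ratio_inf_le n : (0 < n)%N -> ratio_inf a * n%:R <= a n.
Proof.
move=> n_gt0; rewrite -ler_pdivlMr ?ltr0n //.
by apply: (ge_inf ratios_has_inf.2); exists n.
Qed.

Lemma subadd_mulnDr_le q p r : (0 < p)%N -> (0 < r)%N ->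
  a (q * p + r)%N <= q%:R * a p + a r.
Proof.
move=> p_gt0 r_gt0; elim: q => [|q IHq].
  by rewrite mul0n add0n mul0r add0r.
rewrite mulSn -addnA (le_trans (a_subadd p_gt0 _)) ?addn_gt0 ?r_gt0 ?orbT //.
rewrite -natr1 mulrDl mul1r; lra.
Qed.

Lemma ratio_inf_ub eta : 0 < eta ->
  \forall n \near \oo, a n <= (ratio_inf a + eta) * n%:R.
Proof.
move=> eta_gt0; have eta2_gt0 : 0 < eta / 2 by rewrite divr_gt0.
have [_ [p p_gt0 <-] ap_lt] := inf_adherent eta2_gt0 ratios_has_inf.
have {ap_lt} ap_le : a p <= (ratio_inf a + eta / 2) * p%:R.
  by rewrite -ler_pdivrMr ?ltr0n // ltW.
pose A := \sum_(i < p.+1) a i.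
have le_A r : (r <= p)%N -> a r <= A.
  move=> r_le_p; rewrite /A (bigD1 (Ordinal (r_le_p : (r < p.+1)%N))) //=.
  by rewrite lerDl sumr_ge0.
have A2_ge0 : 0 <= A * 2 / eta by rewrite divr_ge0 ?mulr_ge0 ?sumr_ge0 // ltW.
exists (Num.bound (A * 2 / eta)).+1 => // n /= N_le_n.
have n_gt0 : (0 < n)%N by apply: leq_trans N_le_n.
have A_le : A <= eta / 2 * n%:R.
  have : A * 2 / eta < n%:R.
    by apply: lt_le_trans (archi_boundP A2_ge0) _; rewrite ler_nat ltnW.
  by rewrite ltr_pdivrMr // => ?; lra.
have n_eq : n = ((n.-1 %/ p) * p + (n.-1 %% p).+1)%N.
  by rewrite addnS -divn_eq prednK.
have qap_le : (n.-1 %/ p)%:R * a p <= (ratio_inf a + eta / 2) * n%:R.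
  apply: le_trans (ler_wpM2l (ler0n _ _) ap_le) _.
  rewrite mulrCA ler_wpM2l ?addr_ge0 ?ratio_inf_ge0 ?(ltW eta2_gt0) //.
  rewrite -natrM ler_nat.
  by rewrite [X in (_ <= X)%N]n_eq leq_addr.
have ar_le := le_A _ (ltn_pmod n.-1 p_gt0).
rewrite {1}n_eq (le_trans (subadd_mulnDr_le _ _ _)) //; lra.
Qed.

Lemma fekete : (fun n => a n / n%:R) @ \oo --> ratio_inf a.
Proof.
apply/cvgrPdist_le => eps eps_gt0; near=> n.
have n_gt0 : (0 < n)%N by near: n; exists 1%N.
rewrite distrC ger0_norm ?subr_ge0 ?ler_pdivlMr ?ltr0n ?ratio_inf_le //.
rewrite lerBlDl ler_pdivrMr ?ltr0n //.
by near: n; apply: ratio_inf_ub.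
Unshelve. all: by end_near. Qed.

End Fekete.

Lemma no_uniform_descent (R : archiRealFieldType) (f : nat -> R)
    (P : nat -> Prop) (c : R) :
  0 < c -> (forall m, P m -> 0 <= f m) ->
  (forall m, P m -> exists2 m', P m' & f m' <= f m - c) -> forall m, ~ P m.
Proof.
move=> c_gt0 f_ge0 descend m Pm.
have descend_iter j : exists2 m', P m' & f m' <= f m - j%:R * c.
  elim: j => [|j [m' Pm' fm'_le]]; first by exists m; rewrite // mul0r subr0.
  have [m'' Pm'' fm''_le] := descend m' Pm'; exists m'' => //.
  rewrite -natr1 mulrDl mul1r; lra.
have fmc_ge0 : 0 <= f m / c by rewrite divr_ge0 ?f_ge0 ?ltW.
have [m' Pm' fm'_le] := descend_iter (Num.bound (f m / c)).
have := archi_boundP fmc_ge0; rewrite ltr_pdivrMr // => ?.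
have := f_ge0 _ Pm'; lra.
Qed.

Lemma norm_scaleD_unit_le (R : realFieldType) (X : normedModType R) (u w : X)
    (a b g d : R) :
  `|u| = 1 -> `|w| = 1 -> `|u + w| <= 2 - d ->
  0 <= g -> g <= a -> g <= b -> `|a *: u + b *: w| <= a + b - d * g.
Proof.
move=> u1 w1 uw_le g_ge0 g_le_a g_le_b.
have -> : a *: u + b *: w = g *: (u + w) + ((a - g) *: u + (b - g) *: w).
  rewrite scalerDr !scalerBl addrACA.
  by rewrite [g *: u + _]addrC [g *: w + _]addrC !subrK.
apply: (le_trans (ler_normD _ _)).
apply: (@le_trans _ _ (g * (2 - d) + ((a - g) + (b - g)))); last by lra.
apply: lerD; first by rewrite normrZ ger0_norm // ler_wpM2l.
apply: (le_trans (ler_normD _ _)).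
by rewrite !normrZ !ger0_norm ?subr_ge0 // u1 w1 !mulr1.
Qed.

Definition normalize (R : numFieldType) (X : normedModType R) (x : X) : X :=
  `|x|^-1 *: x.

Lemma norm_normalize (R : numFieldType) (X : normedModType R) (x : X) :
  x != 0 -> `|normalize x| = 1.
Proof.
by move=> x_neq0; rewrite normrZ normfV normr_id mulVf // normr_eq0.
Qed.

Lemma normalize_scale (R : numFieldType) (X : normedModType R) (x : X) :
  `|x| *: normalize x = x.
Proof.
have [->|x_neq0] := eqVneq x 0; first by rewrite /normalize !scaler0.
by rewrite scalerA mulfV ?scale1r // normr_eq0.
Qed.

Section NormalizeCauchy.
Variables (R : realType) (X : normedModType R) (v : nat -> X) (L : R).
Hypothesis v_subadd :
  forall n m, (0 < n)%N -> (0 < m)%N -> `|v (n + m)%N| <= `|v n + v m|.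
Hypothesis v_neq0 : forall n, (0 < n)%N -> v n != 0.
Hypothesis v_uconvex :
  uniformly_convex_set [set normalize (v n) | n in [set n : nat | (0 < n)%N]].
Hypothesis L_gt0 : 0 < L.
Hypothesis L_le : forall n, (0 < n)%N -> L * n%:R <= `|v n|.
Hypothesis L_ub :
  forall eta, 0 < eta -> \forall n \near \oo, `|v n| <= (L + eta) * n%:R.

Let excess n := `|v n| - L * n%:R.

Lemma excess_addn_le k m d c : (0 < k)%N -> (k <= m)%N ->
  `|normalize (v k) + normalize (v m)| <= 2 - d ->
  `|v k| <= (L + c) * k%:R ->
  excess (m + k) <= excess m - (d * L - c) * k%:R.
Proof.
move=> k_gt0 k_le_m uc_km vk_le.
have m_gt0 := leq_trans k_gt0 k_le_m.
have Lk_le_vm : L * k%:R <= `|v m|.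
  by apply: le_trans (L_le m_gt0); rewrite ler_wpM2l ?ler_nat // ltW.
have := norm_scaleD_unit_le (norm_normalize (v_neq0 k_gt0))
  (norm_normalize (v_neq0 m_gt0)) uc_km (mulr_ge0 (ltW L_gt0) (ler0n _ k))
  (L_le k_gt0) Lk_le_vm.
rewrite !normalize_scale addrC => vmk_le.
have := le_trans (v_subadd m_gt0 k_gt0) vmk_le.
rewrite /excess natrD; lra.
Qed.

Lemma normalize_dist_le eps : 0 < eps -> exists N, forall n n',
  (N <= n)%N -> (N <= n')%N -> `|normalize (v n) - normalize (v n')| <= 2 * eps.
Proof.
move=> eps_gt0; have [d [d_gt0 [_ uc_d]]] := v_uconvex eps_gt0.
have c_gt0 : 0 < d * L / 2 by rewrite divr_gt0 ?mulr_gt0.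
have [N _ vN_le] := L_ub c_gt0.
exists N.+1 => n n' Nn Nn'; rewrite leNgt; apply/negP => far.
have n_gt0 : (0 < n)%N := leq_trans (ltn0Sn N) Nn.
pose u k := normalize (v k).
apply: (@no_uniform_descent _ excess (fun m => n + n' <= m)%N (d * L / 2)
  c_gt0 _ _ (n + n')%N (leqnn _)).
  move=> m nn'_le_m; rewrite subr_ge0 L_le //.
  by apply: leq_trans nn'_le_m; rewrite addn_gt0 n_gt0.
move=> m nn'_le_m.
have [k [Nk k_le_m far_km]] :
    exists k, [/\ (N < k)%N, (k <= m)%N & eps <= `|u k - u m|].
  have [far_n|near_n] := lerP eps `|u n - u m|.
    by exists n; split=> //; apply: leq_trans nn'_le_m; rewrite leq_addr.
  have [far_n'|near_n'] := lerP eps `|u n' - u m|.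
    by exists n'; split=> //; apply: leq_trans nn'_le_m; rewrite leq_addl.
  have := ler_distD (u m) (u n) (u n'); rewrite [`|u m - u n'|]distrC; lra.
have k_gt0 : (0 < k)%N := leq_ltn_trans (leq0n N) Nk.
have m_gt0 : (0 < m)%N := leq_trans k_gt0 k_le_m.
have uc_km : `|u k + u m| <= 2 - d.
  apply: uc_d far_km; [by exists k | by exists m | |];
  exact: norm_normalize (v_neq0 _).
exists (m + k)%N; first by apply: leq_trans nn'_le_m (leq_addr _ _).
have := excess_addn_le k_gt0 k_le_m uc_km (vN_le k (ltnW Nk)).
have : d * L / 2 <= (d * L - d * L / 2) * k%:R.
  by rewrite {2}(splitr (d * L)) addrK ler_peMr ?ler1n // ltW.
lra.
Qed.

Lemma normalize_cauchy : cauchy ((fun n => normalize (v n)) @ \oo).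
Proof.
apply: cauchy_exP => e e_gt0.
have [N N_close] := normalize_dist_le (divr_gt0 e_gt0 (ltr0n R 4)).
exists (normalize (v N)), N => // n /= Nn; rewrite -ball_normE /=.
by apply: le_lt_trans (N_close _ _ (leqnn N) Nn) _; lra.
Qed.

End NormalizeCauchy.

Theorem mainTheorem7 (R : realType) (X : completeNormedModType R)
  (v : nat -> X) :
  (forall n m : nat, (0 < n)%N -> (0 < m)%N -> `|v (n + m)%N| <= `|v n + v m|) ->
  ((exists i : nat, (0 < i)%N /\ v i = 0) \/
   ((forall n : nat, (0 < n)%N -> v n != 0) /\
    uniformly_convex_set [set `|v n|^-1 *: v n | n in [set n : nat | (0 < n)%N]])) ->
  cvg ((fun n : nat => (n%:R)^-1 *: v n) @ \oo).
Proof.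
move=> v_subadd v_cases.
pose a n := `|v n|.
have a_ge0 n : 0 <= a n by exact: normr_ge0.
have a_subadd n m : (0 < n)%N -> (0 < m)%N -> a (n + m)%N <= a n + a m.
  by move=> n_gt0 m_gt0; apply: le_trans (v_subadd _ _ n_gt0 m_gt0) (ler_normD _ _).
have ratio_cvg := fekete a_ge0 a_subadd.
have [L0|L_gt0] := eqVneq (ratio_inf a) 0.
  apply: (cvgP 0); apply: norm_cvg0.
  have -> : (fun n => `|n%:R^-1 *: v n|) = (fun n => a n / n%:R).
    by apply/funext => n; rewrite normrZ ger0_norm // mulrC.
  by rewrite -L0.
have {}L_gt0 : 0 < ratio_inf a by rewrite lt_def L_gt0 ratio_inf_ge0.
case: v_cases => [[i [i_gt0 vi0]] | [v_neq0 v_uconvex]].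
  have := ratio_inf_le a_ge0 i_gt0; rewrite /a vi0 normr0 leNgt.
  by rewrite mulr_gt0 ?ltr0n.
have /cvg_ex[u u_lim] : cvg ((fun n => normalize (v n)) @ \oo).
  apply: cauchy_cvg; apply: (normalize_cauchy v_subadd v_neq0 v_uconvex L_gt0).
    exact: ratio_inf_le.
  exact: ratio_inf_ub.
have v_ratio n : n%:R^-1 *: v n = (a n / n%:R) *: normalize (v n).
  by rewrite mulrC -scalerA normalize_scale.
apply: (cvgP (ratio_inf a *: u)); rewrite (funext v_ratio).
exact: cvgZ ratio_cvg u_lim.
Qed.
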